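(* Let $T:\mathbb{R}^d\to\mathbb{R}^d$ be nonexpansive with respect to a norm $\|\cdot\|$ on $\mathbb{R}^d$, with $\operatorname{Fix}T\neq\emptyset$. Let $(\beta_n)_{n\ge1}\subseteq(0,1)$ be nondecreasing with $\lim_n\beta_n=1$, let $x^0\in\mathbb{R}^d$, and let $(x^n)_{n\ge1}$ be generated by $$x^n=(1-\beta_n)x^0+\beta_n\bigl(Tx^{n-1}+U_n\bigr),\qquad n\ge1,$$ where $(U_n)_{n\ge1}$ are random vectors in $\mathbb{R}^d$ with $\mathbb{E}(U_n)=0$ and $\sigma_n:=\mathbb{E}(\|U_n\|)<\infty$. Assume there is $\bar\kappa\ge0$ with $\sup_{n\ge0}\mathbb{E}(\|Tx^n-x^0\|)\le\bar\kappa$. Then for all $n\ge1$, $$\mathbb{E}(\|x^n-Tx^n\|)\le\bar\kappa(1-\beta_n)+\sum_{i=1}^n B_i^n\bigl(\bar\kappa(\beta_i-\beta_{i-1})+\beta_i\sigma_i+\beta_{i-1}\sigma_{i-1}\bigr)+\beta_n\sigma_n.$$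
   Context: Notation: $B_i^n:=\prod_{j=i}^n\beta_j$, with the conventions $\sigma_0=\beta_0=0$ and $B_i^n=1$ if $i>n\ge0$. $\operatorname{Fix}T$ denotes the set of fixed points of $T$. *)

From HB Require Import structures.
From mathcomp Require Import all_boot all_order all_algebra.
From mathcomp Require Import all_classical all_reals all_analysis.
Set Implicit Arguments. Unset Strict Implicit. Unset Printing Implicit Defensive.
Import Order.TTheory GRing.Theory Num.Theory.
Import numFieldNormedType.Exports.
Local Open Scope ring_scope.

Definition is_norm (R : realType) (dim : nat) (N : 'rV[R]_dim -> R) : Prop :=
  [/\ forall x, N x = 0 -> x = 0,
      forall (a : R) x, N (a *: x) = `|a| * N x
    & forall x y, N (x + y) <= N x + N y].

Definition nonexpansive (R : realType) (dim : nat) (N : 'rV[R]_dim -> R)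
  (T : 'rV[R]_dim -> 'rV[R]_dim) : Prop :=
  forall x y, N (T x - T y) <= N (x - y).

Definition Fix (R : realType) (dim : nat) (T : 'rV[R]_dim -> 'rV[R]_dim)
  : set 'rV[R]_dim := [set z | T z = z].

Definition random_vector d (Omega : measurableType d) (R : realType) (dim : nat)
  (X : Omega -> 'rV[R]_dim) : Prop :=
  forall i : 'I_dim, measurable_fun setT (fun w => X w ord0 i).

(* Expectation (in \bar R) of a nonnegative real function. *)
Definition Exp d (Omega : measurableType d) (R : realType)
  (P : probability Omega R) (f : Omega -> R) : \bar R :=
  (\int[P]_w (f w)%:E)%E.

Definition mean_zero d (Omega : measurableType d) (R : realType)
  (P : probability Omega R) (dim : nat) (X : Omega -> 'rV[R]_dim) : Prop :=
  forall i : 'I_dim, P.-integrable setT (fun w => (X w ord0 i)%:E) /\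
    (\int[P]_w (X w ord0 i)%:E = 0)%E.

Definition sigma d (Omega : measurableType d) (R : realType)
  (P : probability Omega R) (dim : nat) (N : 'rV[R]_dim -> R)
  (U : nat -> Omega -> 'rV[R]_dim) (n : nat) : R :=
  if n is 0 then 0 else fine (Exp P (fun w => N (U n w))).

(* B_i^n := prod_{j=i}^n beta_j  (= 1 if i > n) *)
Definition Bprod (R : realType) (beta : nat -> R) (i n : nat) : R :=
  \prod_(i <= j < n.+1) beta j.

From HB Require Import structures.
From mathcomp Require Import all_boot all_order all_algebra.
From mathcomp Require Import all_classical all_reals all_analysis.
From mathcomp Require Import measurable_realfun ring lra.
(* Put a_n := E||x^n - x^(n-1)||, with x^(-1) := x^0.  The recursion gives
   x^(n+1) - x^n = (b_(n+1) - b_n)(T x^n - x^0) + b_n (T x^n - T x^(n-1))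
                   + b_(n+1) U_(n+1) - b_n U_n,
   so nonexpansiveness and the bound on E||T x^n - x^0|| yield
   a_(n+1) <= c_(n+1) + b_n a_n with
   c_i = kappa (b_i - b_(i-1)) + b_i sigma_i + b_(i-1) sigma_(i-1),
   and unrolling gives b_n a_n <= sum_(i <= n) B_i^n c_i.  The theorem then
   follows from
   x^n - T x^n = (1 - b_n)(x^0 - T x^n) + b_n (T x^(n-1) - T x^n) + b_n U_n.
   Taking expectations of these pointwise bounds needs measurability: the
   norm is equivalent to the sup norm, so the norm and T are continuous and
   continuous images of random vectors are random variables. *)

Set Implicit Arguments.
Unset Strict Implicit.
Unset Printing Implicit Defensive.

Import Order.TTheory GRing.Theory Num.Theory.
Import numFieldNormedType.Exports.
Local Open Scope ring_scope.
Local Open Scope classical_set_scope.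

Lemma lipschitz_continuous (K : realFieldType) (V W : normedModType K)
    (f : V -> W) (L : K) :
  (forall u v, `|f u - f v| <= L * `|u - v|) -> continuous f.
Proof.
move=> fL x; apply/cvgrPdist_lt => e e0.
have L1 : 0 < `|L| + 1 by rewrite ltr_wpDl.
near=> y.
have xy : `|x - y| < e / (`|L| + 1).
  by near: y; apply: cvgr_dist_lt => //; apply: divr_gt0.
rewrite ltr_pdivlMr // in xy.
apply: le_lt_trans (fL x y) _; apply: le_lt_trans xy.
have := normr_ge0 (x - y); have := ler_norm L; nra.
Unshelve. all: end_near.
Qed.

Section NormEquivalence.
Variables (R : realType) (n : nat) (N : 'rV[R]_n -> R).
Hypothesis N_norm : is_norm N.

Lemma normD u v : N (u + v) <= N u + N v.
Proof. by case: N_norm. Qed.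

Lemma normZ a v : N (a *: v) = `|a| * N v.
Proof. by case: N_norm. Qed.

Lemma norm0 : N 0 = 0.
Proof. by rewrite -(scale0r 0) normZ normr0 mul0r. Qed.

Lemma normN v : N (- v) = N v.
Proof. by rewrite -scaleN1r normZ normrN normr1 mul1r. Qed.

Lemma norm_ge0 v : 0 <= N v.
Proof. by have := normD v (- v); rewrite subrr norm0 normN; lra. Qed.

Lemma norm_dist u v : `|N u - N v| <= N (u - v).
Proof.
rewrite ler_norml; apply/andP; split.
  by have := normD (v - u) u; rewrite subrK -opprB normN; lra.
by have := normD (u - v) v; rewrite subrK; lra.
Qed.

Lemma coord_le_mx_norm (v : 'rV[R]_n) i : `|v ord0 i| <= `|v|.
Proof.
rewrite [leRHS]/Num.norm /= mx_normrE; apply/bigmax_geP; right.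
by exists (ord0, i).
Qed.

Lemma norm_le_mx_norm : exists2 K, 0 <= K & forall v, N v <= K * `|v|.
Proof.
have norm_sum (r : seq 'I_n) (F : 'I_n -> 'rV[R]_n) :
    N (\sum_(i <- r) F i) <= \sum_(i <- r) N (F i).
  elim: r => [|i r IH]; first by rewrite !big_nil norm0.
  by rewrite !big_cons; apply: le_trans (normD _ _) _; apply: lerD.
exists (\sum_i N 'e_i); first by apply: sumr_ge0 => i _; apply: norm_ge0.
move=> v; rewrite {1}(row_sum_delta v) mulr_suml; apply: le_trans (norm_sum _ _) _.
apply: ler_sum => i _; rewrite normZ mulrC.
by apply: ler_wpM2l; [apply: norm_ge0 | apply: coord_le_mx_norm].
Qed.

Lemma norm_lipschitz_continuous (W : normedModType R) (f : 'rV[R]_n -> W) L :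
  0 <= L -> (forall u v, `|f u - f v| <= L * N (u - v)) -> continuous f.
Proof.
move=> L0 fL; have [K K0 NK] := norm_le_mx_norm.
apply: (@lipschitz_continuous _ _ _ _ (L * K)) => u v.
by apply: le_trans (fL u v) _; rewrite -mulrA ler_wpM2l.
Qed.

Lemma continuous_norm : continuous N.
Proof.
by apply: (@norm_lipschitz_continuous _ _ 1) => // u v; rewrite mul1r norm_dist.
Qed.

Lemma mx_norm_le_norm : exists2 c, 0 < c & forall v, c * `|v| <= N v.
Proof.
have [n0|n_gt0] := posnP n.
  exists 1 => // v; rewrite (_ : v = 0) ?normr0 ?mulr0 ?norm0 //.
  by apply/rowP => -[i lt_in]; exfalso; move: lt_in; rewrite n0.
pose S := [set v : 'rV[R]_n | `|v| = 1].
have one_neq0 : (const_mx 1 : 'rV[R]_n) != 0.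
  apply/eqP => /matrixP /(_ ord0 (Ordinal n_gt0)); rewrite !mxE => /eqP.
  by rewrite oner_eq0.
have S0 : S !=set0.
  exists (`|const_mx 1 : 'rV[R]_n|^-1 *: const_mx 1).
  by rewrite /S /= normrZ normfV normr_id mulVf // normr_eq0.
have cS : compact S.
  apply: bounded_closed_compact; first by exists 1; split => // M /ltW M1 v /= ->.
  rewrite (_ : S = Num.norm @^-1` [set x : R | x = 1]) //.
  by apply: preimage_closed; [move=> v _; apply: norm_continuous | apply: closed_eq].
have [v0 /[1!inE] v01 v0_min] :=
  EVT_min_rV S0 cS (continuous_subspaceT continuous_norm).
have v0_neq0 : v0 != 0 by rewrite -normr_eq0 v01 oner_eq0.
have Nv0 : 0 < N v0.
  rewrite lt_neqAle norm_ge0 andbT eq_sym; apply: contra v0_neq0 => /eqP.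
  by case: N_norm => N0 _ _ /N0 ->.
exists (N v0) => // v; have [->|v_neq0] := eqVneq v 0.
  by rewrite normr0 mulr0 norm0.
have v_gt0 : 0 < `|v| by rewrite normr_gt0.
have := v0_min (`|v|^-1 *: v).
rewrite inE /S /= normrZ normfV normr_id mulVf ?gt_eqF // => /(_ erefl).
by rewrite normZ normfV normr_id ler_pdivlMl // mulrC.
Qed.

Lemma continuous_nonexpansive T : nonexpansive N T -> continuous T.
Proof.
move=> T_nonexp; have [c c_gt0 cN] := mx_norm_le_norm.
apply: (@norm_lipschitz_continuous _ _ c^-1); first by rewrite invr_ge0 ltW.
by move=> u v; rewrite ler_pdivlMl //; apply: le_trans (cN _) (T_nonexp u v).
Qed.

End NormEquivalence.

Section MeasurableRowVector.
Context d (Omega : measurableType d) (R : realType) (n : nat).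
Variable X : Omega -> 'rV[R]_n.
Hypothesis mX : forall i, measurable_fun setT (fun w => X w ord0 i).

Lemma measurable_preimage_ball (q : 'rV[R]_n) (r : R) :
  measurable (X @^-1` ball q r).
Proof.
have [r_gt0|r_le0] := ltP 0 r; last first.
  rewrite (_ : _ @^-1` _ = set0) //; apply/seteqP; split => // w [r_gt0 _].
  by move: r_le0; rewrite leNgt r_gt0.
rewrite (_ : _ @^-1` _ = \bigcap_(i in [set: 'I_n])
    (setT `&` (fun w => X w ord0 i) @^-1` ball (q ord0 i) r)); last first.
  apply/seteqP; split => [w [_ qX] i _ //|w qX]; first by split => //; apply: qX.
  by split => // i j; rewrite ord1; case: (qX j I).
by apply: fin_bigcap_measurable => // i _; apply: mX => //; apply: measurable_ball.
Qed.

Lemma measurable_preimage_open (O : set 'rV[R]_n) :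
  open O -> measurable (X @^-1` O).
Proof.
(* [O] is the union of the balls with rational center and radius inside it. *)
move=> oO.
pose B (p : 'rV[rat]_n * rat) : set 'rV[R]_n :=
  ball (map_mx ratr p.1 : 'rV[R]_n) (ratr p.2).
rewrite (_ : _ @^-1` _ = \bigcup_p
    if pselect (B p `<=` O) is left _ then X @^-1` B p else set0); last first.
  apply/seteqP; split => w; last first.
    by case=> p _; case: pselect => // BO /BO.
  move=> /= Ow; have /nbhs_ballP[e e_gt0 eO] := open_nbhs_nbhs (conj oO Ow).
  have e2_gt0 : 0 < e / 2 by rewrite divr_gt0.
  have [r /[!in_itv] /= /andP[r_gt0 r_lt]] := rat_in_itvoo e2_gt0.
  have near_rat i : exists q : rat, `|X w ord0 i - ratr q| < ratr r.
    have [q /[!in_itv] /= /andP[q1 q2]] :=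
      @rat_in_itvoo R (X w ord0 i - ratr r) (X w ord0 i + ratr r) ltac:(lra).
    by exists q; rewrite ltr_norml; apply/andP; split; lra.
  have [q qX] := fin_all_exists near_rat.
  have XB : B (\row_i q i, r) (X w).
    split => // i j; rewrite ord1 !mxE /ball /= distrC; exact: qX.
  exists (\row_i q i, r) => //; case: pselect => // -[].
  move=> y By; apply: eO; rewrite (splitr e).
  have le_r : (ratr r : R) <= e / 2 by lra.
  exact: ball_triangle (le_ball le_r (ball_sym XB)) (le_ball le_r By).
apply: countable_bigcupT_measurable => [|p]; first exact: countableP.
by case: pselect => // _; apply: measurable_preimage_ball.
Qed.

Lemma measurable_continuous_comp (f : 'rV[R]_n -> R) :
  continuous f -> measurable_fun setT (f \o X).
Proof.
move=> cf; apply: (measurability _ (RGenOpens.measurableE R)).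
move=> _ [_ [a [b ->]] <-].
rewrite setTI comp_preimage; apply: measurable_preimage_open.
by apply: open_comp => [v _|]; [exact: cf | exact: interval_open].
Qed.

End MeasurableRowVector.

Section Expectation.
Context d (Omega : measurableType d) (R : realType) (P : probability Omega R).
Implicit Types f g : Omega -> R.

Lemma Exp_ge0 f : (forall w, 0 <= f w) -> (0 <= Exp P f)%E.
Proof. by move=> f0; apply: integral_ge0 => w _; rewrite lee_fin. Qed.

Lemma le_Exp f g : (forall w, 0 <= f w) ->
  measurable_fun setT f -> measurable_fun setT g -> (forall w, f w <= g w) ->
  (Exp P f <= Exp P g)%E.
Proof.
move=> f0 mf mg fg; apply: ge0_le_integral => //.
- by move=> w _; rewrite lee_fin.
- exact/measurable_EFinP.
- exact/measurable_EFinP.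
- by move=> w _; rewrite lee_fin.
Qed.

Lemma ExpD f g : (forall w, 0 <= f w) -> (forall w, 0 <= g w) ->
  measurable_fun setT f -> measurable_fun setT g ->
  Exp P (fun w => f w + g w) = (Exp P f + Exp P g)%E.
Proof.
move=> f0 g0 mf mg; rewrite /Exp; under eq_fun do rewrite EFinD.
apply: ge0_integralD => //.
- by move=> w _; rewrite lee_fin.
- exact/measurable_EFinP.
- by move=> w _; rewrite lee_fin.
- exact/measurable_EFinP.
Qed.

Lemma ExpZ (a : R) f : 0 <= a -> (forall w, 0 <= f w) -> measurable_fun setT f ->
  Exp P (fun w => a * f w) = (a%:E * Exp P f)%E.
Proof.
move=> a0 f0 mf; rewrite /Exp; under eq_fun do rewrite EFinM.
apply: ge0_integralZl_EFin => //.
- by move=> w _; rewrite lee_fin.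
- exact/measurable_EFinP.
Qed.

Lemma le_Exp_lincomb (a b : R) (F G H g : Omega -> R) : 0 <= a -> 0 <= b ->
  (forall w, 0 <= F w) -> (forall w, 0 <= G w) -> (forall w, 0 <= H w) ->
  (forall w, 0 <= g w) ->
  measurable_fun setT F -> measurable_fun setT G -> measurable_fun setT H ->
  measurable_fun setT g ->
  (forall w, g w <= a * F w + b * G w + H w) ->
  (Exp P g <= a%:E * Exp P F + b%:E * Exp P G + Exp P H)%E.
Proof.
move=> a0 b0 F0 G0 H0 g0 mF mG mH mg le_g.
have aF0 w : 0 <= a * F w by apply: mulr_ge0.
have bG0 w : 0 <= b * G w by apply: mulr_ge0.
have maF : measurable_fun setT (fun w => a * F w) by apply: measurable_funM.
have mbG : measurable_fun setT (fun w => b * G w) by apply: measurable_funM.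
have maFbG : measurable_fun setT (fun w => a * F w + b * G w).
  exact: measurable_funD.
apply: le_trans (le_Exp g0 mg _ le_g) _; first exact: measurable_funD.
rewrite ExpD //; last by move=> w; apply: addr_ge0.
by rewrite ExpD // !ExpZ.
Qed.

End Expectation.

Section WeightedProducts.
Variables (R : realType) (beta : nat -> R).

Lemma Bprod_recr i n :
  (i <= n.+1)%N -> Bprod beta i n.+1 = Bprod beta i n * beta n.+1.
Proof. by move=> le_in; rewrite /Bprod big_nat_recr. Qed.

Lemma sum_Bprod_recr (c : nat -> R) n :
  \sum_(1 <= i < n.+2) Bprod beta i n.+1 * c i =
  beta n.+1 * (c n.+1 + \sum_(1 <= i < n.+1) Bprod beta i n * c i).
Proof.
rewrite big_nat_recr //= /Bprod big_nat1 mulrDr mulr_sumr addrC; congr (_ + _).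
apply: eq_big_nat => i /andP[_ lt_in].
by rewrite -/(Bprod _ _ _) Bprod_recr 1?ltnW // [RHS]mulrCA mulrA.
Qed.

End WeightedProducts.

Section HalpernIteration.
Variables (R : realType) (dim : nat) (N : 'rV[R]_dim -> R)
  (T : 'rV[R]_dim -> 'rV[R]_dim)
  (d : measure_display) (Omega : measurableType d) (P : probability Omega R)
  (beta : nat -> R) (x0 : 'rV[R]_dim)
  (U : nat -> Omega -> 'rV[R]_dim) (x : nat -> Omega -> 'rV[R]_dim)
  (kappa : R).
Hypothesis N_norm : is_norm N.
Hypothesis T_nonexp : nonexpansive N T.
Hypothesis beta0 : beta 0%N = 0.
Hypothesis beta_range : forall n, (1 <= n)%N -> 0 < beta n < 1.
Hypothesis beta_mono : forall n m, (1 <= n)%N -> (n <= m)%N -> beta n <= beta m.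
Hypothesis U_random : forall n, (1 <= n)%N -> random_vector (U n).
Hypothesis U_Exp_fin :
  forall n, (1 <= n)%N -> (Exp P (fun w => N (U n w)) < +oo)%E.
Hypothesis x_0 : forall w, x 0%N w = x0.
Hypothesis x_S : forall n w, (1 <= n)%N ->
  x n w = (1 - beta n) *: x0 + beta n *: (T (x n.-1 w) + U n w).
Hypothesis Tx_bound :
  forall n, (Exp P (fun w => N (T (x n w) - x0)) <= kappa%:E)%E.

Lemma beta_ge0 n : 0 <= beta n.
Proof.
by case: n => [|n]; [rewrite beta0 | case/andP: (beta_range (ltn0Sn n)) => /ltW].
Qed.

Lemma beta_le1 n : beta n <= 1.
Proof.
by case: n => [|n]; [rewrite beta0 | case/andP: (beta_range (ltn0Sn n)) => _ /ltW].
Qed.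

Lemma beta_le_succ n : beta n <= beta n.+1.
Proof. by case: n => [|n]; [rewrite beta0 beta_ge0 | apply: beta_mono]. Qed.

(* Since beta 0 = 0 the recursion also holds at n = 0, where 0.-1 = 0. *)
Lemma x_eq n w : x n w = (1 - beta n) *: x0 + beta n *: (T (x n.-1 w) + U n w).
Proof.
by case: n => [|n]; [rewrite x_0 beta0 subr0 scale1r scale0r addr0 | apply: x_S].
Qed.

Lemma x_succ_sub n w : x n.+1 w - x n w =
  (beta n.+1 - beta n) *: (T (x n w) - x0) + beta n *: (T (x n w) - T (x n.-1 w))
  + beta n.+1 *: U n.+1 w - beta n *: U n w.
Proof.
by rewrite (x_eq n.+1) (x_eq n); apply/rowP => j; rewrite !mxE; ring.
Qed.

Lemma x_sub_Tx n w : x n w - T (x n w) =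
  (1 - beta n) *: (x0 - T (x n w)) + beta n *: (T (x n.-1 w) - T (x n w))
  + beta n *: U n w.
Proof. by rewrite {1}x_eq; apply/rowP => j; rewrite !mxE; ring. Qed.

Lemma norm_x_succ_sub_le n w : N (x n.+1 w - x n w) <=
  (beta n.+1 - beta n) * N (T (x n w) - x0) + beta n * N (x n w - x n.-1 w)
  + beta n.+1 * N (U n.+1 w) + beta n * N (U n w).
Proof.
have db : 0 <= beta n.+1 - beta n by rewrite subr_ge0 beta_le_succ.
rewrite x_succ_sub; apply: le_trans (normD N_norm _ _) _.
rewrite normN // normZ // ger0_norm ?beta_ge0 //; apply: lerD => //.
apply: le_trans (normD N_norm _ _) _; rewrite normZ // ger0_norm ?beta_ge0 //.
apply: lerD => //; apply: le_trans (normD N_norm _ _) _.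
rewrite !normZ // !ger0_norm ?beta_ge0 //; apply: lerD => //.
by apply: ler_wpM2l; [apply: beta_ge0 | apply: T_nonexp].
Qed.

Lemma norm_x_sub_Tx_le n w : N (x n w - T (x n w)) <=
  (1 - beta n) * N (T (x n w) - x0) + beta n * N (x n w - x n.-1 w)
  + beta n * N (U n w).
Proof.
have b1 : 0 <= 1 - beta n by rewrite subr_ge0 beta_le1.
rewrite x_sub_Tx; apply: le_trans (normD N_norm _ _) _.
rewrite normZ // ger0_norm ?beta_ge0 //; apply: lerD => //.
apply: le_trans (normD N_norm _ _) _; rewrite !normZ // !ger0_norm ?beta_ge0 //.
rewrite -normN // opprB; apply: lerD => //.
by apply: ler_wpM2l; [apply: beta_ge0 | rewrite -normN // opprB T_nonexp].
Qed.

Lemma measurable_T_coord (X : Omega -> 'rV[R]_dim) :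
  (forall i, measurable_fun setT (fun w => X w ord0 i)) ->
  forall i, measurable_fun setT (fun w => T (X w) ord0 i).
Proof.
move=> mX i.
apply: (measurable_continuous_comp mX (f := fun v => T v ord0 i)) => v.
apply: (continuous_comp (g := fun M : 'rV[R]_dim => M ord0 i)).
  exact: (continuous_nonexpansive N_norm T_nonexp).
exact: coord_continuous.
Qed.

Lemma measurable_x n i : measurable_fun setT (fun w => x n w ord0 i).
Proof.
elim: n i => [|n IH] i.
  by under eq_fun do rewrite x_0; exact: measurable_cst.
under eq_fun do rewrite x_S // !mxE.
apply: measurable_funD => //; apply: measurable_funM => //.
by apply: measurable_funD; [apply: measurable_T_coord | apply: U_random].
Qed.

Lemma measurable_norm_sub (X Y : Omega -> 'rV[R]_dim) :
  (forall i, measurable_fun setT (fun w => X w ord0 i)) ->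
  (forall i, measurable_fun setT (fun w => Y w ord0 i)) ->
  measurable_fun setT (fun w => N (X w - Y w)).
Proof.
move=> mX mY; apply: (@measurable_continuous_comp _ _ _ _ (fun w => X w - Y w)).
  by move=> i; under eq_fun do rewrite !mxE; apply: measurable_funB.
exact: continuous_norm.
Qed.

Lemma measurable_norm_Tx_sub n : measurable_fun setT (fun w => N (T (x n w) - x0)).
Proof.
apply: measurable_norm_sub; first exact: measurable_T_coord (measurable_x n).
by move=> i; apply: measurable_cst.
Qed.

Lemma measurable_norm_x_step n :
  measurable_fun setT (fun w => N (x n w - x n.-1 w)).
Proof. by apply: measurable_norm_sub; apply: measurable_x. Qed.

Lemma measurable_noise n : measurable_fun setT (fun w => beta n * N (U n w)).
Proof.
case: n => [|n].
  by rewrite beta0; under eq_fun do rewrite mul0r; apply: measurable_cst.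
apply: measurable_funM => //.
by apply: measurable_continuous_comp (continuous_norm N_norm); apply: U_random.
Qed.

Lemma noise_ge0 n w : 0 <= beta n * N (U n w).
Proof. by apply: mulr_ge0; [apply: beta_ge0 | apply: norm_ge0]. Qed.

Lemma Exp_noise n :
  Exp P (fun w => beta n * N (U n w)) = (beta n * sigma P N U n)%:E.
Proof.
case: n => [|n].
  by rewrite /Exp beta0 mul0r; under eq_fun do rewrite mul0r; apply: integral0.
have mNU : measurable_fun setT (fun w => N (U n.+1 w)).
  by apply: measurable_continuous_comp (continuous_norm N_norm); apply: U_random.
rewrite ExpZ ?beta_ge0 // => [|w]; last exact: norm_ge0.
rewrite EFinM /sigma /= fineK // ge0_fin_numE ?U_Exp_fin //.
by apply: Exp_ge0 => w; apply: norm_ge0.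
Qed.

Let incr_coef i := kappa * (beta i - beta i.-1) + beta i * sigma P N U i
  + beta i.-1 * sigma P N U i.-1.

Lemma Exp_x_step_succ_le n :
  (Exp P (fun w => N (x n.+1 w - x n w)) <=
   (incr_coef n.+1)%:E + (beta n)%:E * Exp P (fun w => N (x n w - x n.-1 w)))%E.
Proof.
have db : 0 <= beta n.+1 - beta n by rewrite subr_ge0 beta_le_succ.
apply: le_trans (le_Exp_lincomb P
  (H := fun w => beta n.+1 * N (U n.+1 w) + beta n * N (U n w))
  db (beta_ge0 n) _ _ _ _ (measurable_norm_Tx_sub n) (measurable_norm_x_step n) _
  (measurable_norm_x_step n.+1) _) _.
- by move=> w; apply: norm_ge0.
- by move=> w; apply: norm_ge0.
- by move=> w; apply: addr_ge0; apply: noise_ge0.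
- by move=> w; apply: norm_ge0.
- by apply: measurable_funD; apply: measurable_noise.
- by move=> w; rewrite addrA; apply: norm_x_succ_sub_le.
rewrite ExpD ?Exp_noise //; try exact: noise_ge0; try exact: measurable_noise.
rewrite addeAC; apply: leeD => //; rewrite /incr_coef /= !EFinD -addeA.
by apply: leeD => //; rewrite mulrC EFinM; apply: lee_wpmul2l.
Qed.

Lemma Exp_x_step_weighted_le n :
  ((beta n)%:E * Exp P (fun w => N (x n w - x n.-1 w)) <=
   (\sum_(1 <= i < n.+1) Bprod beta i n * incr_coef i)%:E)%E.
Proof.
elim: n => [|n IH]; first by rewrite beta0 mul0e big_geq.
rewrite sum_Bprod_recr EFinM; apply: lee_wpmul2l; first by rewrite lee_fin beta_ge0.
apply: le_trans (Exp_x_step_succ_le n) _.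
by rewrite [X in (_ <= X)%E]EFinD; apply: leeD.
Qed.

Lemma Exp_x_sub_Tx_le n :
  (Exp P (fun w => N (x n w - T (x n w))) <=
   (kappa * (1 - beta n) + \sum_(1 <= i < n.+1) Bprod beta i n * incr_coef i
    + beta n * sigma P N U n)%:E)%E.
Proof.
have b1 : 0 <= 1 - beta n by rewrite subr_ge0 beta_le1.
apply: le_trans (le_Exp_lincomb P b1 (beta_ge0 n) _ _ (noise_ge0 n) _
  (measurable_norm_Tx_sub n) (measurable_norm_x_step n) (measurable_noise n) _
  (norm_x_sub_Tx_le n)) _.
- by move=> w; apply: norm_ge0.
- by move=> w; apply: norm_ge0.
- by move=> w; apply: norm_ge0.
- apply: measurable_norm_sub; first exact: measurable_x.
  exact: measurable_T_coord (measurable_x n).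
rewrite Exp_noise !EFinD; apply: leeD => //.
apply: leeD; last exact: Exp_x_step_weighted_le.
by rewrite mulrC EFinM; apply: lee_wpmul2l.
Qed.

End HalpernIteration.

Theorem proposition1 (R : realType) (dim : nat) (N : 'rV[R]_dim -> R)
  (T : 'rV[R]_dim -> 'rV[R]_dim)
  (d : measure_display) (Omega : measurableType d) (P : probability Omega R)
  (beta : nat -> R) (x0 : 'rV[R]_dim)
  (U : nat -> Omega -> 'rV[R]_dim) (x : nat -> Omega -> 'rV[R]_dim)
  (kappa : R) :
  is_norm N ->
  nonexpansive N T ->
  (Fix T !=set0)%classic ->
  beta 0%N = 0 ->
  (forall n, (1 <= n)%N -> 0 < beta n < 1) ->
  (forall n m, (1 <= n)%N -> (n <= m)%N -> beta n <= beta m) ->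
  (beta @ \oo --> (1 : R))%classic ->
  (forall n, (1 <= n)%N -> random_vector (U n)) ->
  (forall n, (1 <= n)%N -> mean_zero P (U n)) ->
  (forall n, (1 <= n)%N -> (Exp P (fun w => N (U n w)) < +oo)%E) ->
  (forall w, x 0%N w = x0) ->
  (forall n w, (1 <= n)%N ->
     x n w = (1 - beta n) *: x0 + beta n *: (T (x n.-1 w) + U n w)) ->
  0 <= kappa ->
  (forall n, (Exp P (fun w => N (T (x n w) - x0)%R) <= kappa%:E)%E) ->
  forall n, (1 <= n)%N ->
    (Exp P (fun w => N (x n w - T (x n w))%R) <=
      (kappa * (1 - beta n)
       + \sum_(1 <= i < n.+1) Bprod beta i n *
           (kappa * (beta i - beta i.-1) + beta i * sigma P N U i
            + beta i.-1 * sigma P N U i.-1)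
       + beta n * sigma P N U n)%:E)%E.
Proof.
move=> N_norm T_nonexp _ beta0 beta_range beta_mono _ U_random _ U_Exp_fin
  x_0 x_S _ Tx_bound n _.
exact: Exp_x_sub_Tx_le.
Qed.
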